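(* There exist sequences $(\lambda_n)_{n\ge0}$ of positive numbers and $(b_n)_{n\ge0}$ of real numbers such that the classical Jacobi matrix $(Ju)(n)=\lambda_nu(n+1)+b_nu(n)+\lambda_{n-1}u(n-1)$ is not essentially selfadjoint, while the classical Jacobi matrix $(J'u)(n)=\lambda_nu(n+1)+\lambda_{n-1}u(n-1)$ is essentially selfadjoint (both considered in $\ell^2(\mathbb N_0)$ with domain the finitely supported sequences, and with the convention $\lambda_{-1}u(-1)=0$). *)

(* classical reals. Complex numbers are modelled as pairs (re, im). *)
From Stdlib Require Import Reals.
Open Scope R_scope.

Definition Cseq := nat -> (R * R)%type.

Definition series_to (f : nat -> R) (l : R) : Prop :=
  Un_cv (fun N => sum_f_R0 f N) l.

Definition l2 (u : Cseq) : Prop :=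
  exists l, series_to (fun n => fst (u n) ^ 2 + snd (u n) ^ 2) l.

Definition dist2_lt (u v : Cseq) (eps : R) : Prop :=
  exists l, series_to (fun n => (fst (u n) - fst (v n)) ^ 2
                               + (snd (u n) - snd (v n)) ^ 2) l /\ l < eps.

(* <u, v> = a + i c, with <u,v> = sum_n u(n) * conj (v(n)) *)
Definition inner_is (u v : Cseq) (a c : R) : Prop :=
  series_to (fun n => fst (u n) * fst (v n) + snd (u n) * snd (v n)) a /\
  series_to (fun n => snd (u n) * fst (v n) - fst (u n) * snd (v n)) c.

(* (possibly unbounded) operators on l^2 are represented by their graphs *)
Definition graph := Cseq -> Cseq -> Prop.

Definition closure (G : graph) : graph := fun u x =>
  l2 u /\ l2 x /\
  forall eps, 0 < eps ->
    exists u' x', G u' x' /\ dist2_lt u u' eps /\ dist2_lt x x' eps.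

Definition adjoint (G : graph) : graph := fun v w =>
  l2 v /\ l2 w /\
  forall u x, G u x -> forall a c, inner_is x v a c -> inner_is u w a c.

Definition ess_selfadjoint (G : graph) : Prop :=
  forall u x, closure G u x <-> adjoint (closure G) u x.

Definition fin_supp (u : Cseq) : Prop :=
  exists N, forall n, (N <= n)%nat -> u n = (0, 0).

Definition cscale (r : R) (z : R * R) : R * R := (r * fst z, r * snd z).
Definition cadd (z w : R * R) : R * R := (fst z + fst w, snd z + snd w).

Definition jacobi_apply (lam b : nat -> R) (u : Cseq) : Cseq := fun n =>
  cadd (cadd (cscale (lam n) (u (S n))) (cscale (b n) (u n)))
       (match n with O => (0, 0) | S m => cscale (lam m) (u m) end).

Definition jacobi (lam b : nat -> R) : graph := fun u x =>
  fin_supp u /\ forall n, x n = jacobi_apply lam b u n.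

(** Take [lam n = 4 ^ (n / 2)].  For [b 0 = -1] and [b n = -(3/2) lam n] (n >= 1), the sequences
    [v n = 2 ^ -(n/2)] and [w n = (n + n/2) 2 ^ -(n/2)] are square summable and solve [J v = 0]
    and [J w = delta 0].  The adjoint of the closure of a Jacobi matrix is the maximal operator,
    so both pairs lie in it; since [<0, w> = 0 <> 1 = <v, delta 0>], the adjoint is not
    symmetric.

    For [b = 0], even entries of [J' u] involve only odd entries of [u] and vice versa.  If [u]
    and [J' u] are in l^2, then [(J' u)(2k+1) = 4^k (u(2k) + u(2k+2))] forces [4^M u(2M+2)] to be
    small for suitable large [M]; so one may cut the even entries after [2M], and continue the
    odd entries beyond [2K+1] by the decaying solution [(-1)^(k-K) 4^(K-k) u(2K+1)] of
    [(J' w)(2k) = 0], damped linearly to zero over [L] steps at a cost [O(1/L)] in [J' w].  These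
    finitely supported truncations approximate [(u, J' u)] in the graph norm, so the maximal
    operator is the closure. *)

From Stdlib Require Import Reals Lra Lia.
Open Scope R_scope.

Lemma Un_cv_const (c : R) : Un_cv (fun _ => c) c.
Proof.
  intros e He. exists 0%nat. intros. unfold Rdist.
  rewrite Rminus_diag, Rabs_R0. exact He.
Qed.

Lemma series_to_ext f g l : (forall n, f n = g n) -> series_to f l -> series_to g l.
Proof.
  intros H Hf. apply Un_cv_ext with (2 := Hf). intro N. apply sum_eq. auto.
Qed.

Lemma series_to_plus f g a b :
  series_to f a -> series_to g b -> series_to (fun n => f n + g n) (a + b).
Proof.
  intros Hf Hg. apply Un_cv_ext with (fun N => sum_f_R0 f N + sum_f_R0 g N).
  - intro N. symmetry. apply plus_sum.
  - apply CV_plus; assumption.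
Qed.

Lemma series_to_minus f g a b :
  series_to f a -> series_to g b -> series_to (fun n => f n - g n) (a - b).
Proof.
  intros Hf Hg. apply Un_cv_ext with (fun N => sum_f_R0 f N - sum_f_R0 g N).
  - intro N. symmetry. apply minus_sum.
  - apply CV_minus; assumption.
Qed.

Lemma sum_f_R0_scal c f N : sum_f_R0 (fun n => c * f n) N = c * sum_f_R0 f N.
Proof. rewrite scal_sum. apply sum_eq. intros; ring. Qed.

Lemma series_to_scal c f a : series_to f a -> series_to (fun n => c * f n) (c * a).
Proof.
  intros Hf. apply Un_cv_ext with (fun N => c * sum_f_R0 f N).
  - intro N. symmetry. apply sum_f_R0_scal.
  - apply CV_mult; [apply Un_cv_const | exact Hf].
Qed.

Lemma series_to_unique f a b : series_to f a -> series_to f b -> a = b.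
Proof. apply UL_sequence. Qed.

Lemma series_to_abs_le f g a c :
  (forall n, Rabs (f n) <= g n) -> series_to f a -> series_to g c -> Rabs a <= c.
Proof. intros H Hf Hg. exact (sum_cv_maj g (fun n _ => f n) 0 a c Hf Hg (fun n => H n)). Qed.

Lemma series_to_eventually_eq f g a N :
  (forall M, (N <= M)%nat -> sum_f_R0 f M = sum_f_R0 g M) ->
  series_to f a -> series_to g a.
Proof.
  intros H Hf e He. destruct (Hf e He) as [N0 HN0]. exists (max N N0). intros n Hn.
  rewrite <- H by lia. apply HN0. lia.
Qed.

Lemma sum_f_R0_stationary f N : (forall n, (N <= n)%nat -> f n = 0) ->
  forall M, (N <= M)%nat -> sum_f_R0 f M = sum_f_R0 f N.
Proof. intros H M HM. induction HM; auto. simpl. rewrite IHHM, H by lia. ring. Qed.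

Lemma series_to_finite_support f N :
  (forall n, (N <= n)%nat -> f n = 0) -> series_to f (sum_f_R0 f N).
Proof.
  intros H e He. exists N. intros n Hn. unfold Rdist.
  rewrite (sum_f_R0_stationary f N H n Hn), Rminus_diag, Rabs_R0. exact He.
Qed.

Lemma series_to_0 f : (forall n, f n = 0) -> series_to f 0.
Proof.
  intros H. replace 0 with (sum_f_R0 f 0) by (simpl; apply H).
  apply series_to_finite_support. auto.
Qed.

Lemma partial_sum_le_series f l :
  (forall n, 0 <= f n) -> series_to f l -> forall N, sum_f_R0 f N <= l.
Proof. intros H Hf N. apply sum_incr; auto. Qed.

Lemma series_to_ge0 f l : (forall n, 0 <= f n) -> series_to f l -> 0 <= l.
Proof.
  intros H Hf. apply Rle_trans with (sum_f_R0 f 0).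
  - apply cond_pos_sum. exact H.
  - apply partial_sum_le_series; assumption.
Qed.

Lemma series_bounded_ge0 f B :
  (forall n, 0 <= f n) -> (forall N, sum_f_R0 f N <= B) -> exists l, series_to f l /\ l <= B.
Proof.
  intros H0 HB.
  assert (Hg : Un_growing (fun N => sum_f_R0 f N)).
  { intro n. simpl. specialize (H0 (S n)). lra. }
  assert (Hub : has_ub (fun N => sum_f_R0 f N)) by (exists B; intros x [n ->]; apply HB).
  destruct (growing_cv _ Hg Hub) as [l Hl]. exists l. split; [exact Hl|].
  exact (Rle_cv_lim HB Hl (Un_cv_const B)).
Qed.

Lemma series_comparison f g l :
  (forall n, 0 <= f n <= g n) -> series_to g l -> exists l', series_to f l'.
Proof. intros H Hg. destruct (Rseries_CV_comp f g H (exist _ l Hg)) as [l' Hl']. eauto. Qed.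

Lemma series_tail_small f l : series_to f l ->
  forall d, 0 < d -> exists m0, forall m, (m0 <= m)%nat -> l - sum_f_R0 f m < d.
Proof.
  intros Hf d Hd. destruct (Hf d Hd) as [N HN]. exists N. intros m Hm.
  specialize (HN m Hm). unfold Rdist in HN. apply Rabs_def2 in HN. lra.
Qed.

Lemma series_term_le_tail f l n :
  (forall n, 0 <= f n) -> series_to f l -> f (S n) <= l - sum_f_R0 f n.
Proof. intros H0 Hf. pose proof (partial_sum_le_series f l H0 Hf (S n)). simpl in H. lra. Qed.

Lemma series_terms_small f l : (forall n, 0 <= f n) -> series_to f l ->
  forall d, 0 < d -> exists N, forall n, (N <= n)%nat -> f n < d.
Proof.
  intros H0 Hf d Hd. destruct (series_tail_small f l Hf d Hd) as [m0 Hm0].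
  exists (S m0). intros [|n] Hn; [lia|].
  pose proof (series_term_le_tail f l n H0 Hf). pose proof (Hm0 n ltac:(lia)). lra.
Qed.

Lemma geometric_series_le f C q : 0 <= q < 1 -> 0 <= C ->
  (forall n, 0 <= f n <= C * q ^ n) -> exists l, series_to f l.
Proof.
  intros Hq HC H. destruct (series_bounded_ge0 f (C / (1 - q))) as [l [Hl _]].
  - intro n; apply H.
  - intro N. apply Rle_trans with (sum_f_R0 (fun n => C * q ^ n) N).
    { apply sum_Rle; intros; apply H. }
    rewrite sum_f_R0_scal, tech3 by lra.
    assert (0 <= q ^ S N) by (apply pow_le; lra).
    unfold Rdiv. apply Rmult_le_compat_l; [exact HC|].
    rewrite <- (Rmult_1_l (/ (1 - q))) at 2.
    apply Rmult_le_compat_r; [left; apply Rinv_0_lt_compat|]; lra.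
  - eauto.
Qed.

Definition tail_seq (f : nat -> R) (m : nat) : nat -> R :=
  fun n => if (m <? n)%nat then f n else 0.

Lemma tail_seq_gt f m n : (m < n)%nat -> tail_seq f m n = f n.
Proof. intros H. unfold tail_seq. rewrite (proj2 (Nat.ltb_lt _ _) H). reflexivity. Qed.

Lemma tail_seq_ge0 f m n : (forall n, 0 <= f n) -> 0 <= tail_seq f m n.
Proof. intros H. unfold tail_seq. destruct (m <? n)%nat; [apply H | lra]. Qed.

Lemma sum_tail_seq f m N :
  sum_f_R0 (tail_seq f m) N = sum_f_R0 f N - sum_f_R0 f (Nat.min N m).
Proof.
  induction N; [unfold tail_seq; simpl; ring|].
  change (sum_f_R0 (tail_seq f m) (S N))
    with (sum_f_R0 (tail_seq f m) N + tail_seq f m (S N)).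
  rewrite IHN. unfold tail_seq.
  destruct (Nat.ltb_spec m (S N)).
  - rewrite (Nat.min_r N m), (Nat.min_r (S N) m) by lia. simpl. ring.
  - rewrite (Nat.min_l N m), (Nat.min_l (S N) m) by lia. simpl. ring.
Qed.

Lemma sum_tail_seq_le f l m N : (forall n, 0 <= f n) -> series_to f l ->
  sum_f_R0 (tail_seq f m) N <= l - sum_f_R0 f m.
Proof.
  intros H0 Hf. rewrite sum_tail_seq.
  destruct (Nat.le_ge_cases N m).
  - rewrite Nat.min_l by assumption. pose proof (partial_sum_le_series f l H0 Hf m). lra.
  - rewrite Nat.min_r by assumption. pose proof (partial_sum_le_series f l H0 Hf N). lra.
Qed.

Lemma sum_tail_geometric q m N : 0 < q < 1 ->
  sum_f_R0 (tail_seq (fun n => q ^ n) m) N <= q ^ S m / (1 - q).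
Proof.
  intros Hq. rewrite sum_tail_seq, !tech3 by lra.
  assert (0 <= q ^ S N) by (apply pow_le; lra).
  assert (0 <= q ^ S m) by (apply pow_le; lra).
  destruct (Nat.le_ge_cases N m).
  - rewrite Nat.min_l by assumption. rewrite Rminus_diag.
    apply Rmult_le_pos; [lra | left; apply Rinv_0_lt_compat; lra].
  - rewrite Nat.min_r by assumption.
    replace ((1 - q ^ S N) / (1 - q) - (1 - q ^ S m) / (1 - q))
      with ((q ^ S m - q ^ S N) / (1 - q)) by (field; lra).
    unfold Rdiv. apply Rmult_le_compat_r; [left; apply Rinv_0_lt_compat|]; lra.
Qed.

Definition in_window (m p n : nat) : bool := ((m <? n)%nat && (n <=? m + p)%nat)%bool.

Lemma sum_window_le c m p N : 0 <= c ->
  sum_f_R0 (fun n => if in_window m p n then c else 0) N <= c * INR p.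
Proof.
  intros Hc.
  rewrite (sum_eq _ (fun n => tail_seq (fun _ => c) m n - tail_seq (fun _ => c) (m + p) n)).
  2:{ intros i _. unfold tail_seq, in_window.
      destruct (Nat.ltb_spec m i), (Nat.leb_spec i (m + p)), (Nat.ltb_spec (m + p) i);
        simpl; try lia; ring. }
  rewrite minus_sum, !sum_tail_seq, !sum_cte.
  assert (INR (S (Nat.min N (m + p))) <= INR (S (Nat.min N m)) + INR p)
    by (rewrite <- plus_INR; apply le_INR; lia).
  assert (INR (S (Nat.min N m)) <= INR (S (Nat.min N (m + p)))) by (apply le_INR; lia).
  nra.
Qed.

Lemma sum_single z p N : (p <= N)%nat ->
  sum_f_R0 (fun n => if Nat.eqb n p then z else 0) N = z.
Proof.
  intros H. induction H as [|N HpN IH].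
  - destruct p; [reflexivity|].
    change (sum_f_R0 (fun n => if Nat.eqb n (S p) then z else 0) p
            + (if Nat.eqb (S p) (S p) then z else 0) = z).
    rewrite Nat.eqb_refl, sum_eq_R0; [ring|].
    intros n Hn. destruct (Nat.eqb_spec n (S p)); [lia | reflexivity].
  - change (sum_f_R0 (fun n => if Nat.eqb n p then z else 0) N
            + (if Nat.eqb (S N) p then z else 0) = z).
    rewrite IH. destruct (Nat.eqb_spec (S N) p); [lia | ring].
Qed.

Lemma sum_single_le z p N : 0 <= z ->
  sum_f_R0 (fun n => if Nat.eqb n p then z else 0) N <= z.
Proof.
  intros Hz. destruct (Nat.le_gt_cases p N).
  - rewrite sum_single by assumption. lra.
  - rewrite sum_eq_R0; [exact Hz|]. intros n Hn. destruct (Nat.eqb_spec n p); [lia | reflexivity].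
Qed.

Definition sqnorm (u : Cseq) (n : nat) : R := fst (u n) ^ 2 + snd (u n) ^ 2.
Definition dot_re (u v : Cseq) (n : nat) : R := fst (u n) * fst (v n) + snd (u n) * snd (v n).
Definition dot_im (u v : Cseq) (n : nat) : R := snd (u n) * fst (v n) - fst (u n) * snd (v n).
Definition csub (u v : Cseq) : Cseq := fun n => (fst (u n) - fst (v n), snd (u n) - snd (v n)).
Definition mul_negi (u : Cseq) : Cseq := fun n => (snd (u n), - fst (u n)).

Lemma sqnorm_ge0 u n : 0 <= sqnorm u n.
Proof. unfold sqnorm. nra. Qed.

Lemma dot_im_mul_negi u v n : dot_im u v n = dot_re (mul_negi u) v n.
Proof. unfold dot_im, dot_re, mul_negi. simpl. ring. Qed.

Lemma sqnorm_mul_negi u n : sqnorm (mul_negi u) n = sqnorm u n.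
Proof. unfold sqnorm, mul_negi. simpl. ring. Qed.

Lemma dist2_lt_mul_negi u v e : dist2_lt u v e -> dist2_lt (mul_negi u) (mul_negi v) e.
Proof.
  intros [l [Hl Hle]]. exists l. split; [|exact Hle].
  apply series_to_ext with (2 := Hl). intro n. simpl. ring.
Qed.

Lemma dist2_lt_le u v e e' : e <= e' -> dist2_lt u v e -> dist2_lt u v e'.
Proof. intros He [l [Hl Hle]]. exists l. split; [exact Hl | lra]. Qed.

Lemma dot_re_abs_le p q n t : 0 < t ->
  Rabs (dot_re p q n) <= (t * sqnorm p n + sqnorm q n / t) / 2.
Proof.
  intros Ht. unfold dot_re, sqnorm.
  set (a := fst (p n)). set (b := snd (p n)). set (c := fst (q n)). set (d := snd (q n)).
  assert (Hsq : forall x y, 0 <= x ^ 2 + y ^ 2) by (intros x y; nra).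
  assert (Hp : 0 <= t * (t * (a ^ 2 + b ^ 2) + (c ^ 2 + d ^ 2) / t + 2 * (a * c + b * d))).
  { replace (t * _) with ((t * a + c) ^ 2 + (t * b + d) ^ 2) by (field; lra). apply Hsq. }
  assert (Hm : 0 <= t * (t * (a ^ 2 + b ^ 2) + (c ^ 2 + d ^ 2) / t - 2 * (a * c + b * d))).
  { replace (t * _) with ((t * a - c) ^ 2 + (t * b - d) ^ 2) by (field; lra). apply Hsq. }
  apply Rabs_le. split; nra.
Qed.

Lemma dot_re_series u v : l2 u -> l2 v -> exists a, series_to (dot_re u v) a.
Proof.
  intros [A HA] [B HB].
  assert (Hg : series_to (fun n => / 2 * (sqnorm u n + sqnorm v n)) (/ 2 * (A + B)))
    by (apply series_to_scal, series_to_plus; assumption).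
  destruct (series_comparison (fun n => dot_re u v n + / 2 * (sqnorm u n + sqnorm v n))
              (fun n => 2 * (/ 2 * (sqnorm u n + sqnorm v n))) (2 * (/ 2 * (A + B))))
    as [c Hc].
  - intro n. pose proof (dot_re_abs_le u v n 1 Rlt_0_1) as H.
    pose proof (Rle_abs (- dot_re u v n)) as H'. rewrite Rabs_Ropp in H'.
    unfold Rdiv in H. rewrite Rinv_1 in H. split; [|pose proof (Rle_abs (dot_re u v n))]; lra.
  - apply series_to_scal. exact Hg.
  - exists (c - / 2 * (A + B)).
    apply series_to_ext with (2 := series_to_minus _ _ _ _ Hc Hg). intro n. ring.
Qed.

Lemma dot_im_series u v : l2 u -> l2 v -> exists a, series_to (dot_im u v) a.
Proof.
  intros [A HA] Hv. destruct (dot_re_series (mul_negi u) v) as [a Ha]; [|exact Hv|].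
  - exists A. apply series_to_ext with (2 := HA). intro n. symmetry. apply sqnorm_mul_negi.
  - exists a. apply series_to_ext with (2 := Ha). intro n. symmetry. apply dot_im_mul_negi.
Qed.

Lemma dot_re_continuous p q a Q : series_to (dot_re p q) a -> series_to (sqnorm q) Q ->
  forall e, 0 < e -> exists d, 0 < d /\
    forall p' a', dist2_lt p p' d -> series_to (dot_re p' q) a' -> Rabs (a - a') <= e.
Proof.
  intros Ha HQ e He.
  assert (HQ0 : 0 <= Q) by exact (series_to_ge0 _ _ (sqnorm_ge0 q) HQ).
  set (t := (Q + 1) / e).
  assert (Ht : 0 < t) by (unfold t; apply Rdiv_lt_0_compat; lra).
  exists (e / t). split; [apply Rdiv_lt_0_compat; lra|].
  intros p' a' [l [Hl Hle]] Ha'.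
  assert (Hd : series_to (dot_re (csub p p') q) (a - a')).
  { apply series_to_ext with (2 := series_to_minus _ _ _ _ Ha Ha'). intro n.
    unfold dot_re, csub. simpl. ring. }
  assert (Hb : series_to (fun n => / 2 * (t * sqnorm (csub p p') n + / t * sqnorm q n))
                         (/ 2 * (t * l + / t * Q)))
    by (apply series_to_scal, series_to_plus; apply series_to_scal; assumption).
  assert (Habs : Rabs (a - a') <= / 2 * (t * l + / t * Q)).
  { refine (series_to_abs_le _ _ _ _ _ Hd Hb). intro n.
    eapply Rle_trans; [apply (dot_re_abs_le _ _ n t Ht)|]. right. unfold Rdiv. ring. }
  assert (t * l <= e) by (apply Rmult_le_reg_r with (/ t); [apply Rinv_0_lt_compat; lra|];
    rewrite Rmult_comm, <- Rmult_assoc, Rinv_l by lra; unfold Rdiv in Hle; lra).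
  assert (/ t * Q <= e) by (unfold t; rewrite Rinv_div;
    apply Rmult_le_reg_r with (Q + 1); [lra|]; unfold Rdiv; field_simplify; nra).
  lra.
Qed.

Lemma dot_im_continuous p q a Q : series_to (dot_im p q) a -> series_to (sqnorm q) Q ->
  forall e, 0 < e -> exists d, 0 < d /\
    forall p' a', dist2_lt p p' d -> series_to (dot_im p' q) a' -> Rabs (a - a') <= e.
Proof.
  intros Ha HQ e He.
  destruct (dot_re_continuous (mul_negi p) q a Q) with (3 := He) as [d [Hd H]];
    [apply series_to_ext with (2 := Ha); intro n; apply dot_im_mul_negi | exact HQ |].
  exists d. split; [exact Hd|]. intros p' a' Hpp' Ha'.
  apply (H (mul_negi p')); [apply dist2_lt_mul_negi; exact Hpp'|].
  apply series_to_ext with (2 := Ha'). intro n. apply dot_im_mul_negi.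
Qed.

Lemma inner_is_continuous p q a c Q : inner_is p q a c -> series_to (sqnorm q) Q ->
  forall e, 0 < e -> exists d, 0 < d /\
    forall p' a' c', dist2_lt p p' d -> inner_is p' q a' c' ->
    Rabs (a - a') <= e /\ Rabs (c - c') <= e.
Proof.
  intros [Ha Hc] HQ e He.
  destruct (dot_re_continuous p q a Q Ha HQ e He) as [d1 [Hd1 H1]].
  destruct (dot_im_continuous p q c Q Hc HQ e He) as [d2 [Hd2 H2]].
  exists (Rmin d1 d2). split; [apply Rmin_glb_lt; assumption|].
  intros p' a' c' Hpp' [Ha' Hc']. split.
  - apply (H1 p'); [apply (dist2_lt_le _ _ _ _ (Rmin_l _ _) Hpp') | exact Ha'].
  - apply (H2 p'); [apply (dist2_lt_le _ _ _ _ (Rmin_r _ _) Hpp') | exact Hc'].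
Qed.

Lemma dist2_lt_coord u v e k : dist2_lt u v e ->
  (fst (u k) - fst (v k)) ^ 2 < e /\ (snd (u k) - snd (v k)) ^ 2 < e.
Proof.
  intros [l [Hl Hle]]. change (series_to (sqnorm (csub u v)) l) in Hl.
  assert (Hk : sqnorm (csub u v) k <= l).
  { apply Rle_trans with (sum_f_R0 (sqnorm (csub u v)) k).
    - destruct k; [simpl; lra|]. simpl.
      pose proof (cond_pos_sum (sqnorm (csub u v)) k (sqnorm_ge0 _)). lra.
    - exact (partial_sum_le_series _ _ (sqnorm_ge0 _) Hl k). }
  unfold sqnorm, csub in Hk. simpl in Hk.
  pose proof (pow2_ge_0 (fst (u k) - fst (v k))). pose proof (pow2_ge_0 (snd (u k) - snd (v k))).
  lra.
Qed.

Lemma fin_supp_l2 u : fin_supp u -> l2 u.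
Proof.
  intros [N HN]. exists (sum_f_R0 (sqnorm u) N). apply series_to_finite_support.
  intros n Hn. unfold sqnorm. rewrite HN by assumption. simpl. ring.
Qed.

Definition delta (n : nat) : Cseq := fun k => if Nat.eqb k n then (1, 0) else (0, 0).

Lemma delta_fin_supp n : fin_supp (delta n).
Proof. exists (S n). intros k Hk. unfold delta. destruct (Nat.eqb_spec k n); [lia | reflexivity]. Qed.

Lemma dot_re_delta q n : series_to (dot_re (delta n) q) (fst (q n)).
Proof.
  apply series_to_ext with (fun k => if Nat.eqb k n then fst (q n) else 0).
  - intro k. unfold dot_re, delta. destruct (Nat.eqb_spec k n); subst; simpl; ring.
  - intros e He. exists n. intros m Hm. unfold Rdist.
    rewrite sum_single, Rminus_diag, Rabs_R0 by lia. exact He.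
Qed.

Lemma dot_im_delta q n : series_to (dot_im (delta n) q) (- snd (q n)).
Proof.
  apply series_to_ext with (fun k => if Nat.eqb k n then - snd (q n) else 0).
  - intro k. unfold dot_im, delta. destruct (Nat.eqb_spec k n); subst; simpl; ring.
  - intros e He. exists n. intros m Hm. unfold Rdist.
    rewrite sum_single, Rminus_diag, Rabs_R0 by lia. exact He.
Qed.

(** * Jacobi matrices on finitely supported sequences, their closures and adjoints *)

Definition jacobi_real (lam b : nat -> R) (f : nat -> R) (n : nat) : R :=
  lam n * f (S n) + b n * f n + match n with O => 0 | S m => lam m * f m end.

Lemma jacobi_apply_fst lam b u n :
  fst (jacobi_apply lam b u n) = jacobi_real lam b (fun k => fst (u k)) n.
Proof. unfold jacobi_apply, jacobi_real, cadd, cscale. destruct n; simpl; ring. Qed.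

Lemma jacobi_apply_snd lam b u n :
  snd (jacobi_apply lam b u n) = jacobi_real lam b (fun k => snd (u k)) n.
Proof. unfold jacobi_apply, jacobi_real, cadd, cscale. destruct n; simpl; ring. Qed.

Lemma jacobi_apply_mul_negi lam b u n :
  jacobi_apply lam b (mul_negi u) n = mul_negi (jacobi_apply lam b u) n.
Proof. unfold jacobi_apply, mul_negi, cadd, cscale. destruct n; simpl; f_equal; ring. Qed.

Lemma jacobi_apply_fin_supp lam b u N : (forall n, (N <= n)%nat -> u n = (0, 0)) ->
  forall n, (S N <= n)%nat -> jacobi_apply lam b u n = (0, 0).
Proof.
  intros H [|n] Hn; [lia|]. unfold jacobi_apply.
  rewrite (H (S (S n))), (H (S n)), (H n) by lia. unfold cadd, cscale. simpl. f_equal; ring.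
Qed.

Lemma sum_jacobi_real_green lam b f g M :
  sum_f_R0 (fun n => jacobi_real lam b f n * g n - f n * jacobi_real lam b g n) M
  = lam M * (f (S M) * g M - f M * g (S M)).
Proof.
  induction M as [|M IH]; [unfold jacobi_real; simpl; ring|].
  simpl sum_f_R0. rewrite IH. unfold jacobi_real. ring.
Qed.

Lemma sum_dot_re_jacobi_sym lam b u v N : (forall n, (N <= n)%nat -> u n = (0, 0)) ->
  forall M, (N <= M)%nat ->
  sum_f_R0 (dot_re (jacobi_apply lam b u) v) M = sum_f_R0 (dot_re u (jacobi_apply lam b v)) M.
Proof.
  intros H M HM. apply Rminus_diag_uniq. rewrite <- minus_sum.
  rewrite (sum_eq _ (fun n =>
      (jacobi_real lam b (fun k => fst (u k)) n * fst (v n)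
       - fst (u n) * jacobi_real lam b (fun k => fst (v k)) n)
    + (jacobi_real lam b (fun k => snd (u k)) n * snd (v n)
       - snd (u n) * jacobi_real lam b (fun k => snd (v k)) n))).
  2:{ intros i _. unfold dot_re. rewrite !jacobi_apply_fst, !jacobi_apply_snd. ring. }
  rewrite plus_sum, !sum_jacobi_real_green, (H M), (H (S M)) by lia. simpl. ring.
Qed.

Lemma sum_dot_im_jacobi_sym lam b u v N : (forall n, (N <= n)%nat -> u n = (0, 0)) ->
  forall M, (N <= M)%nat ->
  sum_f_R0 (dot_im (jacobi_apply lam b u) v) M = sum_f_R0 (dot_im u (jacobi_apply lam b v)) M.
Proof.
  intros H M HM.
  rewrite (sum_eq (dot_im _ _) (dot_re (jacobi_apply lam b (mul_negi u)) v)),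
          (sum_eq (dot_im u _) (dot_re (mul_negi u) (jacobi_apply lam b v))).
  - apply (sum_dot_re_jacobi_sym lam b _ v N); [|exact HM].
    intros n Hn. unfold mul_negi. rewrite H by exact Hn. simpl. f_equal; ring.
  - intros n _. apply dot_im_mul_negi.
  - intros n _. unfold dot_re. rewrite jacobi_apply_mul_negi. apply dot_im_mul_negi.
Qed.

Lemma inner_is_jacobi_sym lam b u v a c : fin_supp u ->
  inner_is (jacobi_apply lam b u) v a c -> inner_is u (jacobi_apply lam b v) a c.
Proof.
  intros [N HN] [Ha Hc]. split.
  - apply (series_to_eventually_eq _ _ _ N (sum_dot_re_jacobi_sym lam b u v N HN) Ha).
  - apply (series_to_eventually_eq _ _ _ N (sum_dot_im_jacobi_sym lam b u v N HN) Hc).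
Qed.

Lemma jacobi_real_sub lam b f g n :
  jacobi_real lam b f n - jacobi_real lam b g n = jacobi_real lam b (fun k => f k - g k) n.
Proof. unfold jacobi_real. destruct n; ring. Qed.

Lemma jacobi_real_abs_le lam b f n d : (forall k, Rabs (f k) <= d) ->
  Rabs (jacobi_real lam b f n) <= (Rabs (lam n) + Rabs (b n) + Rabs (lam (pred n))) * d.
Proof.
  intros H. unfold jacobi_real.
  assert (Hd : 0 <= d) by (specialize (H 0%nat); pose proof (Rabs_pos (f 0%nat)); lra).
  assert (Hm : forall x k, Rabs (x * f k) <= Rabs x * d)
    by (intros x k; rewrite Rabs_mult; apply Rmult_le_compat_l; [apply Rabs_pos | apply H]).
  pose proof (Rabs_pos (lam (pred n))).
  assert (0 <= Rabs (lam (pred n)) * d) by (apply Rmult_le_pos; assumption).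
  pose proof (Hm (lam n) (S n)). pose proof (Hm (b n) n).
  destruct n as [|m]; simpl.
  - rewrite Rplus_0_r. eapply Rle_trans; [apply Rabs_triang|]. simpl in *. nra.
  - pose proof (Hm (lam m) m). eapply Rle_trans; [apply Rabs_triang|].
    eapply Rle_trans; [apply Rplus_le_compat_r, Rabs_triang|]. simpl in *. nra.
Qed.

Lemma Rabs_sub_le_eq x y : (forall e, 0 < e -> Rabs (x - y) <= e) -> x = y.
Proof.
  intros H. destruct (Req_dec x y) as [|Hxy]; [assumption|]. exfalso.
  assert (0 < Rabs (x - y)) by (apply Rabs_pos_lt; lra).
  specialize (H (Rabs (x - y) / 2) ltac:(lra)). lra.
Qed.

Lemma Rabs_lt_of_sqr x d : 0 < d -> x ^ 2 < d ^ 2 -> Rabs x < d.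
Proof.
  intros Hd H. destruct (Rle_dec 0 x).
  - rewrite Rabs_pos_eq by assumption. nra.
  - rewrite Rabs_left by lra. nra.
Qed.

Lemma jacobi_in_closure lam b u x : jacobi lam b u x -> closure (jacobi lam b) u x.
Proof.
  intros [[N HN] Hx]. split; [|split].
  - apply fin_supp_l2. exists N. exact HN.
  - apply fin_supp_l2. exists (S N). intros n Hn. rewrite Hx.
    exact (jacobi_apply_fin_supp lam b u N HN n Hn).
  - intros e He. exists u, x. split; [split; [exists N|]; assumption|].
    assert (Hw : forall w, dist2_lt w w e).
    { intros w. exists 0. split; [|exact He]. apply series_to_0. intro n. ring. }
    split; apply Hw.
Qed.

(** Each entry of [jacobi_apply lam b u] depends continuously on [u] in l^2. *)
Lemma closure_jacobi_apply lam b u x :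
  closure (jacobi lam b) u x -> forall n, x n = jacobi_apply lam b u n.
Proof.
  intros [_ [_ Hcl]] n.
  set (C := Rabs (lam n) + Rabs (b n) + Rabs (lam (pred n)) + 1).
  assert (HC : 1 <= C)
    by (unfold C; pose proof (Rabs_pos (lam n)); pose proof (Rabs_pos (b n));
        pose proof (Rabs_pos (lam (pred n))); lra).
  assert (close : forall (proj : R * R -> R) e, (proj = fst \/ proj = snd) -> 0 < e ->
            Rabs (proj (x n) - jacobi_real lam b (fun k => proj (u k)) n) <= e).
  { intros proj e Hproj He. set (d := e / (2 * C)).
    assert (Hd : 0 < d) by (unfold d; apply Rdiv_lt_0_compat; lra).
    destruct (Hcl (d ^ 2) ltac:(apply pow_lt; lra)) as [u' [x' [[_ Hx'] [Hdu Hdx]]]].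
    assert (Hcoord : forall w w' k, dist2_lt w w' (d ^ 2) -> Rabs (proj (w k) - proj (w' k)) < d)
      by (intros w w' k Hw; apply Rabs_lt_of_sqr; [exact Hd|];
          destruct Hproj as [-> | ->]; apply (dist2_lt_coord w w' _ k Hw)).
    pose proof (Hcoord _ _ n Hdx) as Hxn.
    assert (Hproj_J : proj (x' n) = jacobi_real lam b (fun k => proj (u' k)) n)
      by (rewrite Hx'; destruct Hproj as [-> | ->];
          [apply jacobi_apply_fst | apply jacobi_apply_snd]).
    assert (Hu' : forall k, Rabs (proj (u' k) - proj (u k)) <= d)
      by (intro k; rewrite Rabs_minus_sym; left; apply Hcoord, Hdu).
    pose proof (jacobi_real_abs_le lam b _ n d Hu') as HJ.
    rewrite <- jacobi_real_sub, <- Hproj_J in HJ.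
    replace (proj (x n) - _) with ((proj (x n) - proj (x' n))
      + (proj (x' n) - jacobi_real lam b (fun k => proj (u k)) n)) by ring.
    eapply Rle_trans; [apply Rabs_triang|].
    assert (E1 : (Rabs (lam n) + Rabs (b n) + Rabs (lam (pred n))) * d + d = C * d)
      by (unfold C; ring).
    assert (E2 : C * d = e / 2) by (unfold d; field; lra).
    lra. }
  apply injective_projections; [rewrite jacobi_apply_fst | rewrite jacobi_apply_snd];
    apply Rabs_sub_le_eq; intros e He; apply close; auto.
Qed.

Lemma inner_is_jacobi_maximal lam b u v y : fin_supp u ->
  (forall n, y n = jacobi_apply lam b v n) ->
  exists a c, inner_is (jacobi_apply lam b u) v a c /\ inner_is u y a c.
Proof.
  intros [N HN] Hyv.
  pose proof (jacobi_apply_fin_supp lam b u N HN) as HJ0.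
  exists (sum_f_R0 (dot_re (jacobi_apply lam b u) v) (S N)),
         (sum_f_R0 (dot_im (jacobi_apply lam b u) v) (S N)).
  assert (Hin : inner_is (jacobi_apply lam b u) v
                  (sum_f_R0 (dot_re (jacobi_apply lam b u) v) (S N))
                  (sum_f_R0 (dot_im (jacobi_apply lam b u) v) (S N)))
    by (split; apply series_to_finite_support; intros n Hn;
        unfold dot_re, dot_im; rewrite HJ0 by exact Hn; simpl; ring).
  split; [exact Hin|].
  destruct (inner_is_jacobi_sym lam b u v _ _ (ex_intro _ N HN) Hin) as [Hr Hi].
  split; [apply series_to_ext with (2 := Hr) | apply series_to_ext with (2 := Hi)];
    intro n; unfold dot_re, dot_im; rewrite Hyv; reflexivity.
Qed.

Lemma jacobi_maximal_in_adjoint lam b v y :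
  l2 v -> l2 y -> (forall n, y n = jacobi_apply lam b v n) ->
  adjoint (closure (jacobi lam b)) v y.
Proof.
  intros Hv Hy Hyv. split; [exact Hv | split; [exact Hy|]].
  intros u x [Hu [_ Hcl]] a c Hxv.
  destruct (dot_re_series u y Hu Hy) as [a' Ha']. destruct (dot_im_series u y Hu Hy) as [c' Hc'].
  destruct Hv as [V HV]. destruct Hy as [Y HY].
  assert (Heq : forall e, 0 < e -> Rabs (a - a') <= e /\ Rabs (c - c') <= e).
  { intros e He.
    destruct (inner_is_continuous _ _ _ _ _ Hxv HV (e / 2) ltac:(lra)) as [d1 [Hd1 Hclose1]].
    destruct (inner_is_continuous u y a' c' Y (conj Ha' Hc') HY (e / 2) ltac:(lra))
      as [d2 [Hd2 Hclose2]].
    destruct (Hcl (Rmin d1 d2) (Rmin_glb_lt _ _ _ Hd1 Hd2))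
      as [u' [x' [[Hu' Hx'] [Hdu Hdx]]]].
    destruct (inner_is_jacobi_maximal lam b u' v y Hu' Hyv) as (a1 & c1 & [Hr Hi] & Hu'y).
    assert (Hx'v : inner_is x' v a1 c1)
      by (split; [apply series_to_ext with (2 := Hr) | apply series_to_ext with (2 := Hi)];
          intro n; unfold dot_re, dot_im; rewrite Hx'; reflexivity).
    destruct (Hclose1 x' a1 c1 (dist2_lt_le _ _ _ _ (Rmin_l _ _) Hdx) Hx'v).
    destruct (Hclose2 u' a1 c1 (dist2_lt_le _ _ _ _ (Rmin_r _ _) Hdu) Hu'y).
    split; [replace (a - a') with ((a - a1) - (a' - a1)) by ring
           | replace (c - c') with ((c - c1) - (c' - c1)) by ring];
      eapply Rle_trans; try apply Rabs_triang; rewrite Rabs_Ropp; lra. }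
  destruct Hxv as [Ha Hc].
  assert (a = a') by (apply Rabs_sub_le_eq; intros e He; apply Heq, He).
  assert (c = c') by (apply Rabs_sub_le_eq; intros e He; apply Heq, He).
  subst a' c'. split; assumption.
Qed.

Lemma adjoint_jacobi_apply lam b v y :
  adjoint (closure (jacobi lam b)) v y -> forall n, y n = jacobi_apply lam b v n.
Proof.
  intros [Hv [Hy H]] n.
  destruct (inner_is_jacobi_maximal lam b (delta n) v (jacobi_apply lam b v) (delta_fin_supp n)
              (fun _ => eq_refl)) as (a & c & Hin & [H3 H4]).
  assert (Hcl : closure (jacobi lam b) (delta n) (jacobi_apply lam b (delta n)))
    by (apply jacobi_in_closure; split; [apply delta_fin_supp | reflexivity]).
  destruct (H _ _ Hcl a c Hin) as [H1 H2].
  pose proof (series_to_unique _ _ _ H1 (dot_re_delta y n)).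
  pose proof (series_to_unique _ _ _ H3 (dot_re_delta (jacobi_apply lam b v) n)).
  pose proof (series_to_unique _ _ _ H2 (dot_im_delta y n)).
  pose proof (series_to_unique _ _ _ H4 (dot_im_delta (jacobi_apply lam b v) n)).
  apply injective_projections; lra.
Qed.

Lemma adjoint_closure_jacobiE lam b v y :
  adjoint (closure (jacobi lam b)) v y <->
  l2 v /\ l2 y /\ forall n, y n = jacobi_apply lam b v n.
Proof.
  split.
  - intros H. split; [apply H | split; [apply H | exact (adjoint_jacobi_apply lam b v y H)]].
  - intros (Hv & Hy & Hyv). exact (jacobi_maximal_in_adjoint lam b v y Hv Hy Hyv).
Qed.

Lemma ess_selfadjoint_jacobi lam b :
  (forall v y, l2 v -> l2 y -> (forall n, y n = jacobi_apply lam b v n) ->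
     closure (jacobi lam b) v y) ->
  ess_selfadjoint (jacobi lam b).
Proof.
  intros Hmax v y. rewrite adjoint_closure_jacobiE. split.
  - intros Hcl. pose proof (closure_jacobi_apply lam b v y Hcl). destruct Hcl as (Hv & Hy & _).
    auto.
  - intros (Hv & Hy & Hyv). auto.
Qed.

Definition lam4 (n : nat) : R := 4 ^ Nat.div2 n.

Lemma lam4_pos n : 0 < lam4 n.
Proof. apply pow_lt. lra. Qed.

Lemma div2_SS n : Nat.div2 (S (S n)) = S (Nat.div2 n).
Proof. reflexivity. Qed.

Lemma nat_even_odd_cases n : (exists k, n = 2 * k)%nat \/ (exists k, n = S (2 * k))%nat.
Proof.
  destruct (Nat.Even_or_Odd n) as [[k ->]|[k ->]]; [left | right]; exists k; lia.
Qed.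

(** * A perturbation that is not essentially selfadjoint *)

Definition b_defect (n : nat) : R :=
  match n with O => -1 | S _ => - (3 / 2) * 4 ^ Nat.div2 n end.

Definition zero_mode (n : nat) : R := (/ 2) ^ Nat.div2 n.
Definition delta_mode (n : nat) : R := (INR n + INR (Nat.div2 n)) * (/ 2) ^ Nat.div2 n.

Definition real_seq (f : nat -> R) : Cseq := fun n => (f n, 0).

Lemma jacobi_apply_real_seq lam b f n :
  jacobi_apply lam b (real_seq f) n = real_seq (jacobi_real lam b f) n.
Proof.
  apply injective_projections;
    [rewrite jacobi_apply_fst | rewrite jacobi_apply_snd; unfold jacobi_real; destruct n];
    simpl; try reflexivity; ring.
Qed.

Lemma l2_real_seq f L : series_to (fun n => f n ^ 2) L -> l2 (real_seq f).
Proof.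
  intros H. exists L. apply series_to_ext with (2 := H). intro n. simpl. ring.
Qed.

Lemma four_pow_sqr k : 4 ^ k = 2 ^ k * 2 ^ k.
Proof. rewrite <- Rpow_mult_distr. f_equal. Qed.

Lemma jacobi_zero_mode n : jacobi_real lam4 b_defect zero_mode n = 0.
Proof.
  unfold jacobi_real, lam4, b_defect, zero_mode. destruct n as [|m]; [simpl; field|].
  assert (two_pow_nz : forall j, 2 ^ j <> 0) by (intro j; apply pow_nonzero; lra).
  destruct (nat_even_odd_cases m) as [[j ->]|[j ->]];
    rewrite ?div2_SS, ?Nat.div2_double, ?Nat.div2_succ_double; cbn [pow];
    rewrite pow_inv, four_pow_sqr; field; apply two_pow_nz.
Qed.

Lemma jacobi_delta_mode n :
  jacobi_real lam4 b_defect delta_mode n = if Nat.eqb n 0 then 1 else 0.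
Proof.
  unfold jacobi_real, lam4, b_defect, delta_mode. destruct n as [|m]; [simpl; field|].
  assert (two_pow_nz : forall j, 2 ^ j <> 0) by (intro j; apply pow_nonzero; lra).
  change (Nat.eqb (S m) 0) with false. cbv iota.
  destruct (nat_even_odd_cases m) as [[j ->]|[j ->]];
    rewrite ?div2_SS, ?Nat.div2_double, ?Nat.div2_succ_double;
    repeat (rewrite S_INR || rewrite mult_INR); replace (INR 2) with 2 by (simpl; lra);
    cbn [pow]; rewrite pow_inv, four_pow_sqr; field; apply two_pow_nz.
Qed.

Lemma three_quarters_pow_le n : (3 / 4) ^ Nat.div2 n <= 2 * (7 / 8) ^ n.
Proof.
  assert (H : forall k, (3 / 4) ^ k <= (7 / 8) ^ (2 * k))
    by (intro k; rewrite pow_mult; apply pow_incr; lra).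
  destruct (nat_even_odd_cases n) as [[k ->]|[k ->]].
  - rewrite Nat.div2_double. pose proof (H k). pose proof (pow_le (7 / 8) (2 * k)). lra.
  - rewrite Nat.div2_succ_double. cbn [pow].
    pose proof (H k). pose proof (pow_le (7 / 8) (2 * k)). lra.
Qed.

Lemma half_pow_sqr k : ((/ 2) ^ k) ^ 2 = (/ 4) ^ k.
Proof. rewrite <- pow_mult, Nat.mul_comm, pow_mult. f_equal. field. Qed.

Lemma l2_zero_mode : l2 (real_seq zero_mode).
Proof.
  destruct (geometric_series_le (fun n => zero_mode n ^ 2) 2 (7 / 8)) as [L HL]; try lra.
  - intro n. unfold zero_mode. rewrite half_pow_sqr. split; [apply pow_le; lra|].
    pose proof (three_quarters_pow_le n).
    assert ((/ 4) ^ Nat.div2 n <= (3 / 4) ^ Nat.div2 n) by (apply pow_incr; lra). lra.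
  - exact (l2_real_seq _ _ HL).
Qed.

Lemma sqr_succ_le_pow3 k : (INR k + 1) ^ 2 <= 2 * 3 ^ k.
Proof.
  induction k as [|k IH]; [simpl; lra|].
  rewrite S_INR. cbn [pow] in *. pose proof (pos_INR k).
  destruct k; [simpl; lra|]. rewrite S_INR in *. pose proof (pos_INR k). nra.
Qed.

Lemma INR_le_double_div2 n : INR n <= 2 * INR (Nat.div2 n) + 1.
Proof.
  destruct (nat_even_odd_cases n) as [[j ->]|[j ->]];
    rewrite ?Nat.div2_double, ?Nat.div2_succ_double, ?S_INR, mult_INR; simpl; lra.
Qed.

Lemma l2_delta_mode : l2 (real_seq delta_mode).
Proof.
  destruct (geometric_series_le (fun n => delta_mode n ^ 2) 36 (7 / 8)) as [L HL]; try lra.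
  - intro n. unfold delta_mode. set (k := Nat.div2 n). split; [apply pow2_ge_0|].
    rewrite Rpow_mult_distr, half_pow_sqr.
    pose proof (INR_le_double_div2 n) as Hn. fold k in Hn.
    pose proof (pos_INR n). pose proof (pos_INR k).
    assert ((INR n + INR k) ^ 2 <= 9 * (INR k + 1) ^ 2) by nra.
    pose proof (sqr_succ_le_pow3 k).
    assert (0 <= (/ 4) ^ k) by (apply pow_le; lra).
    assert (3 ^ k * (/ 4) ^ k = (3 / 4) ^ k) by (rewrite <- Rpow_mult_distr; f_equal).
    pose proof (three_quarters_pow_le n) as H34. fold k in H34.
    assert ((INR n + INR k) ^ 2 * (/ 4) ^ k <= 18 * (3 ^ k * (/ 4) ^ k)) by nra.
    lra.
  - exact (l2_real_seq _ _ HL).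
Qed.

Lemma not_ess_selfadjoint_defect : ~ ess_selfadjoint (jacobi lam4 b_defect).
Proof.
  intro H.
  assert (Hzero : closure (jacobi lam4 b_defect) (real_seq zero_mode) (fun _ => (0, 0))).
  { apply H, adjoint_closure_jacobiE. split; [exact l2_zero_mode|].
    split; [exact (fin_supp_l2 _ (ex_intro _ 0%nat (fun _ _ => eq_refl)))|].
    intro n. rewrite jacobi_apply_real_seq. unfold real_seq. rewrite jacobi_zero_mode.
    reflexivity. }
  assert (Hdelta : adjoint (closure (jacobi lam4 b_defect)) (real_seq delta_mode) (delta 0)).
  { apply adjoint_closure_jacobiE. split; [exact l2_delta_mode|].
    split; [exact (fin_supp_l2 _ (delta_fin_supp 0))|].
    intro n. rewrite jacobi_apply_real_seq. unfold real_seq, delta. rewrite jacobi_delta_mode.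
    destruct (Nat.eqb n 0); reflexivity. }
  destruct Hdelta as (_ & _ & Hadj).
  destruct (Hadj _ _ Hzero 0 0) as [Hre _].
  { split; apply series_to_0; intro n; simpl; ring. }
  assert (Hre' : series_to (dot_re (delta 0) (real_seq zero_mode)) 0)
    by (apply series_to_ext with (2 := Hre); intro n; unfold dot_re; ring).
  pose proof (series_to_unique _ _ _ Hre' (dot_re_delta _ 0)) as H01.
  unfold real_seq, zero_mode in H01. simpl in H01. lra.
Qed.

(** * The free Jacobi matrix [b = 0] is essentially selfadjoint *)

Definition pow4 (k : nat) : R := 4 ^ k.

Lemma pow4_pos k : 0 < pow4 k.
Proof. apply pow_lt. lra. Qed.

Lemma pow4_mul_inv k : pow4 k * (/ 4) ^ k = 1.
Proof. unfold pow4. rewrite pow_inv. field. apply pow_nonzero. lra. Qed.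

Lemma pow4_ratio_sqr K k : (pow4 K / pow4 k) ^ 2 = 4 ^ S (2 * K) * (/ 4) ^ S (2 * k).
Proof.
  unfold pow4. rewrite pow_inv. cbn [pow].
  replace (4 ^ (2 * K)) with (4 ^ K * 4 ^ K) by (rewrite <- pow_add; f_equal; lia).
  replace (4 ^ (2 * k)) with (4 ^ k * 4 ^ k) by (rewrite <- pow_add; f_equal; lia).
  assert (4 ^ k <> 0) by (apply pow_nonzero; lra). field. assumption.
Qed.

Definition jacobi_free (f : nat -> R) : nat -> R := jacobi_real lam4 (fun _ => 0) f.

Lemma jacobi_free_0 f : jacobi_free f 0 = f 1%nat.
Proof. unfold jacobi_free, jacobi_real, lam4. simpl. ring. Qed.

Lemma jacobi_free_even f k :
  jacobi_free f (2 * S k) = pow4 (S k) * f (S (2 * S k)) + pow4 k * f (S (2 * k)).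
Proof.
  unfold jacobi_free, jacobi_real, lam4, pow4. rewrite Nat.div2_double.
  replace (2 * S k)%nat with (S (S (2 * k))) by lia. rewrite Nat.div2_succ_double. ring.
Qed.

Lemma jacobi_free_odd f k :
  jacobi_free f (S (2 * k)) = pow4 k * f (2 * S k)%nat + pow4 k * f (2 * k)%nat.
Proof.
  unfold jacobi_free, jacobi_real, lam4, pow4. rewrite Nat.div2_succ_double.
  replace (2 * S k)%nat with (S (S (2 * k))) by lia. rewrite Nat.div2_double. ring.
Qed.

Lemma nat_zero_even_odd_cases n :
  n = 0%nat \/ (exists k, n = 2 * S k)%nat \/ (exists k, n = S (2 * k)).
Proof.
  destruct (nat_even_odd_cases n) as [[[|k] ->]|[k ->]]; [left | right; left | right; right];
    eauto; lia.
Qed.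

Lemma even_entry_step f j : Rabs (f (2 * j)%nat)
  <= Rabs (f (2 * S j)%nat) + Rabs (jacobi_free f (S (2 * j))) * (/ 4) ^ j.
Proof.
  rewrite jacobi_free_odd. pose proof (pow4_mul_inv j) as Hj.
  set (x := f (2 * j)%nat). set (y := f (2 * S j)%nat). set (q := (/ 4) ^ j).
  assert (Hq : 0 <= q) by (apply pow_le; lra).
  assert (E : x = (pow4 j * y + pow4 j * x) * q - y)
    by (replace ((pow4 j * y + pow4 j * x) * q) with ((pow4 j * q) * (y + x)) by ring;
        unfold q; rewrite Hj; ring).
  rewrite E at 1. eapply Rle_trans; [apply Rabs_triang|].
  rewrite Rabs_Ropp, Rabs_mult, (Rabs_pos_eq q) by exact Hq. lra.
Qed.

Lemma even_entries_telescope f eta M :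
  (forall j, (M <= j)%nat -> Rabs (jacobi_free f (S (2 * j))) < eta) ->
  forall p m, (M <= m)%nat -> Rabs (f (2 * m)%nat)
    <= Rabs (f (2 * (m + p))%nat) + eta * (4 / 3) * ((/ 4) ^ m - (/ 4) ^ (m + p)).
Proof.
  intros Heta p. induction p as [|p IH]; intros m Hm.
  - rewrite Nat.add_0_r, Rminus_diag. lra.
  - pose proof (even_entry_step f m) as Hstep. pose proof (IH (S m) ltac:(lia)) as HS.
    replace (S m + p)%nat with (m + S p)%nat in HS by lia.
    pose proof (Heta m Hm). assert (0 <= (/ 4) ^ m) by (apply pow_le; lra).
    assert (Rabs (jacobi_free f (S (2 * m))) * (/ 4) ^ m <= eta * (/ 4) ^ m)
      by (apply Rmult_le_compat_r; lra).
    cbn [pow] in HS. lra.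
Qed.

Lemma even_entries_decay f F G :
  series_to (fun n => f n ^ 2) F -> series_to (fun n => jacobi_free f n ^ 2) G ->
  forall d, 0 < d -> forall K, exists M, (K <= M)%nat /\ (pow4 M * f (2 * S M)%nat) ^ 2 < d.
Proof.
  intros HF HG d Hd K.
  set (eta := Rmin 1 (d / 8)).
  assert (He : 0 < eta) by (unfold eta; apply Rmin_glb_lt; lra).
  assert (He1 : eta <= 1) by apply Rmin_l.
  assert (He2 : eta <= d / 8) by apply Rmin_r.
  destruct (series_terms_small _ _ (fun n => pow2_ge_0 _) HG (eta ^ 2) ltac:(apply pow_lt; lra))
    as [N0 HN0].
  set (M := Nat.max K N0).
  assert (Hsmall : forall j, (M <= j)%nat -> Rabs (jacobi_free f (S (2 * j))) < eta)
    by (intros j Hj; apply Rabs_lt_of_sqr; [exact He | apply HN0; unfold M in Hj; lia]).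
  assert (HM4 : 0 < (/ 4) ^ M) by (apply pow_lt; lra).
  destruct (series_terms_small _ _ (fun n => pow2_ge_0 _) HF ((eta * (/ 4) ^ M) ^ 2)
              ltac:(apply pow_lt; nra)) as [N1 HN1].
  pose proof (even_entries_telescope f eta M Hsmall N1 (S M) ltac:(lia)) as Htel.
  assert (Rabs (f (2 * (S M + N1))%nat) < eta * (/ 4) ^ M)
    by (apply Rabs_lt_of_sqr; [nra | apply HN1; lia]).
  assert (0 <= (/ 4) ^ (S M + N1)) by (apply pow_le; lra).
  cbn [pow] in Htel.
  assert (0 <= eta * (4 / 3) * (/ 4) ^ (S M + N1)) by (apply Rmult_le_pos; lra).
  assert (Hb : Rabs (f (2 * S M)%nat) <= eta * (/ 4) ^ M * (4 / 3)) by nra.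
  exists M. split; [unfold M; lia|].
  assert (Hb2 : Rabs (pow4 M * f (2 * S M)%nat) <= eta * (4 / 3)).
  { rewrite Rabs_mult, Rabs_pos_eq by (left; apply pow4_pos).
    pose proof (pow4_pos M).
    apply Rle_trans with (pow4 M * (eta * (/ 4) ^ M * (4 / 3))); [apply Rmult_le_compat_l; lra|].
    replace (pow4 M * (eta * (/ 4) ^ M * (4 / 3))) with ((pow4 M * (/ 4) ^ M) * (eta * (4 / 3)))
      by ring.
    rewrite pow4_mul_inv. lra. }
  rewrite <- (pow2_abs (pow4 M * f (2 * S M)%nat)).
  pose proof (Rabs_pos (pow4 M * f (2 * S M)%nat)).
  assert (Rabs (pow4 M * f (2 * S M)%nat) ^ 2 <= (eta * (4 / 3)) ^ 2) by (apply pow_incr; lra).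
  nra.
Qed.

(** Odd entries beyond [2K+1] follow the solution [(-1)^(k-K) 4^(K-k) f(2K+1)] of
    [jacobi_free u (2k) = 0], damped by a ramp from 1 to 0 over [L] steps; even entries are
    cut off after [2M]. *)
Definition ramp (K L k : nat) : R :=
  if (k <=? K + L)%nat then INR (K + L - k) / INR L else 0.

Definition trunc_even (f : nat -> R) (M k : nat) : R := if (k <=? M)%nat then f (2 * k)%nat else 0.

Definition trunc_odd (f : nat -> R) (K L k : nat) : R :=
  if (k <=? K)%nat then f (S (2 * k))
  else (-1) ^ (k - K) * (pow4 K / pow4 k) * f (S (2 * K)) * ramp K L k.

Definition truncation (f : nat -> R) (K L M n : nat) : R :=
  if Nat.even n then trunc_even f M (Nat.div2 n) else trunc_odd f K L (Nat.div2 n).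

Lemma truncation_even f K L M k : truncation f K L M (2 * k) = trunc_even f M k.
Proof. unfold truncation. rewrite Nat.even_even, Nat.div2_double. reflexivity. Qed.

Lemma truncation_odd f K L M k : truncation f K L M (S (2 * k)) = trunc_odd f K L k.
Proof.
  unfold truncation. replace (S (2 * k)) with (2 * k + 1)%nat by lia.
  rewrite Nat.even_odd, Nat.div2_odd'. reflexivity.
Qed.

Lemma truncation_fin_supp f K L M n :
  (2 * (K + L + M) + 3 <= n)%nat -> truncation f K L M n = 0.
Proof.
  intros Hn. destruct (nat_even_odd_cases n) as [[k ->]|[k ->]].
  - rewrite truncation_even. unfold trunc_even. destruct (Nat.leb_spec k M); [lia | reflexivity].
  - rewrite truncation_odd. unfold trunc_odd, ramp.
    destruct (Nat.leb_spec k K), (Nat.leb_spec k (K + L)); [lia | lia | lia | ring].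
Qed.

Lemma trunc_odd_beyond f K L k : (1 <= L)%nat -> (K <= k)%nat ->
  trunc_odd f K L k = (-1) ^ (k - K) * (pow4 K / pow4 k) * f (S (2 * K)) * ramp K L k.
Proof.
  intros HL Hk. unfold trunc_odd. destruct (Nat.leb_spec k K); [|reflexivity].
  assert (k = K) by lia. subst K. rewrite Nat.sub_diag. unfold ramp.
  rewrite (proj2 (Nat.leb_le _ _)) by lia. replace (k + L - k)%nat with L by lia.
  pose proof (pow4_pos k). assert (INR L <> 0) by (apply not_0_INR; lia).
  simpl. field. split; lra.
Qed.

Lemma ramp_bounds K L k : (1 <= L)%nat -> (K <= k)%nat -> 0 <= ramp K L k <= 1.
Proof.
  intros HL Hk. unfold ramp. destruct (Nat.leb_spec k (K + L)); [|lra].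
  assert (0 < INR L) by (apply lt_0_INR; lia).
  assert (INR (K + L - k) <= INR L) by (apply le_INR; lia).
  pose proof (pos_INR (K + L - k)).
  split; [apply Rle_mult_inv_pos; lra|].
  apply Rmult_le_reg_r with (INR L); [assumption|]. unfold Rdiv.
  rewrite Rmult_assoc, Rinv_l by lra. lra.
Qed.

Lemma ramp_step_sqr K L k : (1 <= L)%nat -> (K <= k)%nat ->
  (ramp K L k - ramp K L (S k)) ^ 2
  <= if in_window (2 * K) (2 * L) (2 * S k) then / INR L ^ 2 else 0.
Proof.
  intros HL Hk. assert (0 < INR L) by (apply lt_0_INR; lia). unfold ramp, in_window.
  destruct (Nat.leb_spec k (K + L)), (Nat.leb_spec (S k) (K + L)),
    (Nat.ltb_spec (2 * K) (2 * S k)), (Nat.leb_spec (2 * S k) (2 * K + 2 * L)); simpl; try lia.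
  - replace (K + L - k)%nat with (S (K + L - S k)) by lia. rewrite S_INR. right. field. lra.
  - assert (k = K + L)%nat by lia. subst. rewrite Nat.sub_diag. simpl. right. field. lra.
  - right; ring.
Qed.

Lemma sqr_sub_le x y : (x - y) ^ 2 <= 2 * x ^ 2 + 2 * y ^ 2.
Proof. pose proof (pow2_ge_0 (x + y)). nra. Qed.

Lemma sign_pow_sqr j : ((-1) ^ j) ^ 2 = 1.
Proof. rewrite <- pow_mult, Nat.mul_comm, pow_mult. replace ((-1) ^ 2) with 1 by ring. apply pow1. Qed.

Lemma truncation_error_sqr f K L M n : (1 <= L)%nat -> (K <= M)%nat ->
  (f n - truncation f K L M n) ^ 2
  <= 2 * tail_seq (fun n => f n ^ 2) (2 * K) n
     + (2 * f (S (2 * K)) ^ 2 * 4 ^ S (2 * K)) * tail_seq (fun n => (/ 4) ^ n) (S (2 * K)) n.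
Proof.
  intros HL HKM.
  assert (P1 : 0 <= 2 * tail_seq (fun n => f n ^ 2) (2 * K) n)
    by (pose proof (tail_seq_ge0 (fun n => f n ^ 2) (2 * K) n (fun n => pow2_ge_0 _)); lra).
  assert (P2 : 0 <= (2 * f (S (2 * K)) ^ 2 * 4 ^ S (2 * K))
                    * tail_seq (fun n => (/ 4) ^ n) (S (2 * K)) n).
  { apply Rmult_le_pos; [|apply tail_seq_ge0; intro; apply pow_le; lra].
    pose proof (pow2_ge_0 (f (S (2 * K)))). pose proof (pow_le 4 (S (2 * K))). nra. }
  assert (Hzero : forall x, (x - x) ^ 2 = 0) by (intro; ring).
  destruct (nat_zero_even_odd_cases n) as [->|[[k ->]|[k ->]]].
  - change (truncation f K L M 0) with (f 0%nat). rewrite Hzero. lra.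
  - rewrite truncation_even. unfold trunc_even. destruct (Nat.leb_spec (S k) M).
    + rewrite Hzero. lra.
    + rewrite tail_seq_gt, Rminus_0_r by lia. pose proof (pow2_ge_0 (f (2 * S k)%nat)). lra.
  - rewrite truncation_odd. destruct (Nat.leb_spec k K).
    + unfold trunc_odd. rewrite (proj2 (Nat.leb_le k K)) by lia. rewrite Hzero. lra.
    + rewrite trunc_odd_beyond by lia. eapply Rle_trans; [apply sqr_sub_le|].
      rewrite !tail_seq_gt by lia.
      rewrite !Rpow_mult_distr, sign_pow_sqr, Rmult_1_l, pow4_ratio_sqr.
      pose proof (ramp_bounds K L k HL ltac:(lia)).
      assert (ramp K L k ^ 2 <= 1) by nra.
      set (A := 4 ^ S (2 * K) * (/ 4) ^ S (2 * k) * f (S (2 * K)) ^ 2).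
      assert (0 <= A).
      { unfold A. pose proof (pow2_ge_0 (f (S (2 * K)))).
        assert (0 <= 4 ^ S (2 * K)) by (apply pow_le; lra).
        assert (0 <= (/ 4) ^ S (2 * k)) by (apply pow_le; lra).
        apply Rmult_le_pos; [apply Rmult_le_pos|]; lra. }
      assert (A * ramp K L k ^ 2 <= A)
        by (rewrite <- (Rmult_1_r A) at 2; apply Rmult_le_compat_l; assumption).
      replace (2 * f (S (2 * K)) ^ 2 * 4 ^ S (2 * K) * (/ 4) ^ S (2 * k)) with (2 * A)
        by (unfold A; ring).
      lra.
Qed.

Lemma jacobi_free_truncation_error_even f K L M k : (1 <= L)%nat ->
  (jacobi_free f (2 * S k) - jacobi_free (truncation f K L M) (2 * S k)) ^ 2
  <= 2 * tail_seq (fun n => jacobi_free f n ^ 2) (2 * K) (2 * S k)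
     + (if in_window (2 * K) (2 * L) (2 * S k)
        then 2 * (pow4 K * f (S (2 * K))) ^ 2 / INR L ^ 2 else 0).
Proof.
  intros HL. assert (HLp : 0 < INR L) by (apply lt_0_INR; lia).
  rewrite !jacobi_free_even, !truncation_odd.
  destruct (Nat.leb_spec (S k) K).
  - unfold trunc_odd. rewrite (proj2 (Nat.leb_le (S k) K)), (proj2 (Nat.leb_le k K)) by lia.
    unfold in_window. rewrite (proj2 (Nat.ltb_ge _ _)) by lia.
    pose proof (tail_seq_ge0 (fun n => jacobi_free f n ^ 2) (2 * K) (2 * S k) (fun n => pow2_ge_0 _)).
    replace ((_ - _) ^ 2) with 0 by ring. cbn [andb]. lra.
  - rewrite (trunc_odd_beyond f K L (S k)), (trunc_odd_beyond f K L k) by lia.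
    replace (S k - K)%nat with (S (k - K)) by lia.
    change ((-1) ^ S (k - K)) with (-1 * (-1) ^ (k - K)).
    set (F := f (S (2 * K))). set (s := (-1) ^ (k - K)).
    pose proof (pow4_pos k). pose proof (pow4_pos (S k)).
    replace (pow4 (S k) * (-1 * s * (pow4 K / pow4 (S k)) * F * ramp K L (S k))
             + pow4 k * (s * (pow4 K / pow4 k) * F * ramp K L k))
      with (s * (pow4 K * F) * (ramp K L k - ramp K L (S k))) by (field; lra).
    rewrite <- jacobi_free_even. eapply Rle_trans; [apply sqr_sub_le|].
    rewrite tail_seq_gt by lia.
    rewrite !Rpow_mult_distr. unfold s. rewrite sign_pow_sqr, Rmult_1_l.
    pose proof (ramp_step_sqr K L k HL ltac:(lia)) as Hramp.
    assert (HKF : 0 <= pow4 K ^ 2 * F ^ 2)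
      by (pose proof (pow2_ge_0 (pow4 K)); pose proof (pow2_ge_0 F); nra).
    destruct (in_window (2 * K) (2 * L) (2 * S k)).
    + assert (pow4 K ^ 2 * F ^ 2 * (ramp K L k - ramp K L (S k)) ^ 2
              <= pow4 K ^ 2 * F ^ 2 * / INR L ^ 2) by (apply Rmult_le_compat_l; assumption).
      unfold Rdiv. lra.
    + assert (pow4 K ^ 2 * F ^ 2 * (ramp K L k - ramp K L (S k)) ^ 2 <= 0)
        by (rewrite <- (Rmult_0_r (pow4 K ^ 2 * F ^ 2)); apply Rmult_le_compat_l; assumption).
      lra.
Qed.

Lemma jacobi_free_truncation_error_odd f K L M k : (K <= M)%nat ->
  (jacobi_free f (S (2 * k)) - jacobi_free (truncation f K L M) (S (2 * k))) ^ 2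
  <= 2 * tail_seq (fun n => jacobi_free f n ^ 2) (2 * K) (S (2 * k))
     + (if Nat.eqb (S (2 * k)) (S (2 * M)) then (pow4 M * f (2 * S M)%nat) ^ 2 else 0).
Proof.
  intros HKM.
  pose proof (tail_seq_ge0 (fun n => jacobi_free f n ^ 2) (2 * K) (S (2 * k)) (fun n => pow2_ge_0 _)).
  rewrite !jacobi_free_odd, !truncation_even. unfold trunc_even.
  destruct (Nat.lt_total k M) as [Hk|[->|Hk]].
  - rewrite (proj2 (Nat.leb_le (S k) M)), (proj2 (Nat.leb_le k M)) by lia.
    replace ((_ - _) ^ 2) with 0 by ring.
    destruct (Nat.eqb _ _); [pose proof (pow2_ge_0 (pow4 M * f (2 * S M)%nat))|]; lra.
  - rewrite Nat.leb_refl, Nat.eqb_refl. destruct (Nat.leb_spec (S M) M); [lia|].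
    replace (_ - _) with (pow4 M * f (2 * S M)%nat) by ring. lra.
  - destruct (Nat.leb_spec (S k) M), (Nat.leb_spec k M); try lia.
    rewrite tail_seq_gt by lia. rewrite <- jacobi_free_odd.
    replace (jacobi_free f (S (2 * k)) - (pow4 k * 0 + pow4 k * 0))
      with (jacobi_free f (S (2 * k))) by ring.
    pose proof (pow2_ge_0 (jacobi_free f (S (2 * k)))).
    destruct (Nat.eqb _ _); [pose proof (pow2_ge_0 (pow4 M * f (2 * S M)%nat))|]; lra.
Qed.

Lemma jacobi_free_truncation_error f K L M n : (1 <= L)%nat -> (K <= M)%nat ->
  (jacobi_free f n - jacobi_free (truncation f K L M) n) ^ 2
  <= 2 * tail_seq (fun n => jacobi_free f n ^ 2) (2 * K) n
     + (if in_window (2 * K) (2 * L) n then 2 * (pow4 K * f (S (2 * K))) ^ 2 / INR L ^ 2 else 0)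
     + (if Nat.eqb n (S (2 * M)) then (pow4 M * f (2 * S M)%nat) ^ 2 else 0).
Proof.
  intros HL HKM.
  assert (HLp : 0 < INR L) by (apply lt_0_INR; lia).
  pose proof (tail_seq_ge0 (fun n => jacobi_free f n ^ 2) (2 * K) n (fun n => pow2_ge_0 _)).
  assert (0 <= (if in_window (2 * K) (2 * L) n
                then 2 * (pow4 K * f (S (2 * K))) ^ 2 / INR L ^ 2 else 0)).
  { destruct (in_window _ _ _); [|lra].
    apply Rle_mult_inv_pos; [pose proof (pow2_ge_0 (pow4 K * f (S (2 * K)))); lra|].
    apply pow_lt. exact HLp. }
  assert (0 <= (if Nat.eqb n (S (2 * M)) then (pow4 M * f (2 * S M)%nat) ^ 2 else 0))
    by (destruct (Nat.eqb _ _); [apply pow2_ge_0 | lra]).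
  destruct (nat_zero_even_odd_cases n) as [->|[[k ->]|[k ->]]].
  - rewrite !jacobi_free_0. change (truncation f K L M 1) with (f 1%nat).
    replace ((f 1%nat - f 1%nat) ^ 2) with 0 by ring. lra.
  - pose proof (jacobi_free_truncation_error_even f K L M k HL). lra.
  - pose proof (jacobi_free_truncation_error_odd f K L M k HKM). lra.
Qed.

Lemma truncation_dist_le f F K L M : (1 <= L)%nat -> (K <= M)%nat ->
  series_to (fun n => f n ^ 2) F ->
  exists l, series_to (fun n => (f n - truncation f K L M n) ^ 2) l
            /\ l <= 3 * (F - sum_f_R0 (fun n => f n ^ 2) (2 * K)).
Proof.
  intros HL HKM HF.
  set (tf := F - sum_f_R0 (fun n => f n ^ 2) (2 * K)).
  set (c := 2 * f (S (2 * K)) ^ 2 * 4 ^ S (2 * K)).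
  assert (Hc : 0 <= c)
    by (unfold c; pose proof (pow2_ge_0 (f (S (2 * K)))); pose proof (pow_le 4 (S (2 * K)) ltac:(lra)); nra).
  destruct (series_bounded_ge0 (fun n => (f n - truncation f K L M n) ^ 2)
              (2 * tf + c * ((/ 4) ^ S (S (2 * K)) / (1 - / 4)))) as [l [Hl Hle]].
  - intro n. apply pow2_ge_0.
  - intro N. eapply Rle_trans.
    { apply sum_Rle. intros n _. apply (truncation_error_sqr f K L M n HL HKM). }
    rewrite plus_sum, !sum_f_R0_scal.
    pose proof (sum_tail_seq_le _ _ (2 * K) N (fun n => pow2_ge_0 _) HF).
    pose proof (sum_tail_geometric (/ 4) (S (2 * K)) N ltac:(lra)).
    assert (c * sum_f_R0 (tail_seq (fun n => (/ 4) ^ n) (S (2 * K))) N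
            <= c * ((/ 4) ^ S (S (2 * K)) / (1 - / 4))) by (apply Rmult_le_compat_l; assumption).
    fold tf in H. fold c. lra.
  - exists l. split; [exact Hl|].
    assert (E : c * ((/ 4) ^ S (S (2 * K)) / (1 - / 4)) = (2 / 3) * f (S (2 * K)) ^ 2).
    { unfold c. cbn [pow]. rewrite pow_inv.
      assert (4 ^ (2 * K) <> 0) by (apply pow_nonzero; lra). field. assumption. }
    pose proof (series_term_le_tail _ _ (2 * K) (fun n => pow2_ge_0 _) HF). cbv beta in H.
    fold tf in H. pose proof (pow2_ge_0 (f (S (2 * K)))). lra.
Qed.

Lemma jacobi_free_truncation_dist_le f G K L M : (1 <= L)%nat -> (K <= M)%nat ->
  series_to (fun n => jacobi_free f n ^ 2) G ->
  exists l, series_to (fun n => (jacobi_free f n - jacobi_free (truncation f K L M) n) ^ 2) l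
            /\ l <= 2 * (G - sum_f_R0 (fun n => jacobi_free f n ^ 2) (2 * K))
                   + 4 * (pow4 K * f (S (2 * K))) ^ 2 / INR L
                   + (pow4 M * f (2 * S M)%nat) ^ 2.
Proof.
  intros HL HKM HG.
  assert (HLp : 0 < INR L) by (apply lt_0_INR; lia).
  set (C := pow4 K * f (S (2 * K))).
  set (c := 2 * C ^ 2 / INR L ^ 2).
  assert (Hc : 0 <= c)
    by (unfold c; apply Rle_mult_inv_pos; [pose proof (pow2_ge_0 C); lra | apply pow_lt; lra]).
  destruct (series_bounded_ge0 (fun n => (jacobi_free f n - jacobi_free (truncation f K L M) n) ^ 2)
     (2 * (G - sum_f_R0 (fun n => jacobi_free f n ^ 2) (2 * K)) + c * INR (2 * L)
      + (pow4 M * f (2 * S M)%nat) ^ 2)) as [l [Hl Hle]].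
  - intro n. apply pow2_ge_0.
  - intro N. eapply Rle_trans.
    { apply sum_Rle. intros n _. apply (jacobi_free_truncation_error f K L M n HL HKM). }
    rewrite (plus_sum (fun n => _ + _)), plus_sum, sum_f_R0_scal.
    pose proof (sum_tail_seq_le _ _ (2 * K) N (fun n => pow2_ge_0 _) HG).
    pose proof (sum_window_le c (2 * K) (2 * L) N Hc).
    pose proof (sum_single_le ((pow4 M * f (2 * S M)%nat) ^ 2) (S (2 * M)) N (pow2_ge_0 _)).
    fold C c. lra.
  - exists l. split; [exact Hl|].
    assert (c * INR (2 * L) = 4 * C ^ 2 / INR L)
      by (unfold c; rewrite mult_INR; simpl (INR 2); field; lra).
    lra.
Qed.

Lemma jacobi_free_approximation f F G :
  series_to (fun n => f n ^ 2) F -> series_to (fun n => jacobi_free f n ^ 2) G ->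
  forall eps, 0 < eps -> exists h,
    (exists N, forall n, (N <= n)%nat -> h n = 0) /\
    (exists l, series_to (fun n => (f n - h n) ^ 2) l /\ l < eps) /\
    (exists l, series_to (fun n => (jacobi_free f n - jacobi_free h n) ^ 2) l /\ l < eps).
Proof.
  intros HF HG eps He.
  destruct (series_tail_small _ _ HF (eps / 4) ltac:(lra)) as [mf Hmf].
  destruct (series_tail_small _ _ HG (eps / 6) ltac:(lra)) as [mg Hmg].
  set (K := (mf + mg)%nat).
  set (C := pow4 K * f (S (2 * K))).
  destruct (INR_archimed eps (12 * C ^ 2) He) as [L0 HL0].
  set (L := S L0).
  assert (HLp : 0 < INR L) by (apply lt_0_INR; lia).
  assert (HL : 4 * C ^ 2 / INR L < eps / 3).
  { apply Rmult_lt_reg_r with (INR L); [exact HLp|].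
    unfold L. rewrite S_INR. pose proof (pos_INR L0).
    unfold Rdiv. rewrite Rmult_assoc, Rinv_l by lra. lra. }
  destruct (even_entries_decay f F G HF HG (eps / 3) ltac:(lra) K) as [M [HKM HM]].
  exists (truncation f K L M). split; [|split].
  - exists (2 * (K + L + M) + 3)%nat. intros n Hn. apply truncation_fin_supp. exact Hn.
  - destruct (truncation_dist_le f F K L M ltac:(lia) HKM HF) as [l [Hl Hle]].
    exists l. split; [exact Hl|]. pose proof (Hmf (2 * K)%nat ltac:(unfold K; lia)). lra.
  - destruct (jacobi_free_truncation_dist_le f G K L M ltac:(lia) HKM HG) as [l [Hl Hle]].
    exists l. split; [exact Hl|]. pose proof (Hmg (2 * K)%nat ltac:(unfold K; lia)). fold C in Hle.
    lra.
Qed.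

Lemma l2_fst_sqr v : l2 v -> exists F, series_to (fun n => fst (v n) ^ 2) F.
Proof.
  intros [l Hl]. apply series_comparison with (2 := Hl). intro n.
  pose proof (pow2_ge_0 (fst (v n))). pose proof (pow2_ge_0 (snd (v n))). lra.
Qed.

Lemma l2_snd_sqr v : l2 v -> exists F, series_to (fun n => snd (v n) ^ 2) F.
Proof.
  intros [l Hl]. apply series_comparison with (2 := Hl). intro n.
  pose proof (pow2_ge_0 (fst (v n))). pose proof (pow2_ge_0 (snd (v n))). lra.
Qed.

Lemma ess_selfadjoint_free : ess_selfadjoint (jacobi lam4 (fun _ => 0)).
Proof.
  apply ess_selfadjoint_jacobi. intros v y Hv Hy Hyv.
  split; [exact Hv | split; [exact Hy|]]. intros eps He.
  destruct (l2_fst_sqr v Hv) as [F1 HF1]. destruct (l2_snd_sqr v Hv) as [F2 HF2].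
  destruct (l2_fst_sqr y Hy) as [G1 HG1]. destruct (l2_snd_sqr y Hy) as [G2 HG2].
  assert (HG1' : series_to (fun n => jacobi_free (fun k => fst (v k)) n ^ 2) G1)
    by (apply series_to_ext with (2 := HG1); intro n; rewrite Hyv, jacobi_apply_fst; reflexivity).
  assert (HG2' : series_to (fun n => jacobi_free (fun k => snd (v k)) n ^ 2) G2)
    by (apply series_to_ext with (2 := HG2); intro n; rewrite Hyv, jacobi_apply_snd; reflexivity).
  destruct (jacobi_free_approximation _ _ _ HF1 HG1' (eps / 2) ltac:(lra))
    as [h1 [[N1 HN1] [[l1 [Hl1 Hl1e]] [m1 [Hm1 Hm1e]]]]].
  destruct (jacobi_free_approximation _ _ _ HF2 HG2' (eps / 2) ltac:(lra))
    as [h2 [[N2 HN2] [[l2' [Hl2 Hl2e]] [m2 [Hm2 Hm2e]]]]].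
  set (u := fun n => (h1 n, h2 n)).
  exists u, (jacobi_apply lam4 (fun _ => 0) u). split; [split|split].
  - exists (Nat.max N1 N2). intros n Hn. unfold u. rewrite HN1, HN2 by lia. reflexivity.
  - reflexivity.
  - exists (l1 + l2'). split; [|lra].
    exact (series_to_plus _ _ _ _ Hl1 Hl2).
  - exists (m1 + m2). split; [|lra].
    apply series_to_ext with (2 := series_to_plus _ _ _ _ Hm1 Hm2). intro n.
    rewrite Hyv, !jacobi_apply_fst, !jacobi_apply_snd. reflexivity.
Qed.

Theorem lemma5 :
  exists (lam b : nat -> R),
    (forall n, 0 < lam n) /\
    ~ ess_selfadjoint (jacobi lam b) /\
    ess_selfadjoint (jacobi lam (fun _ => 0)).
Proof.
  exists lam4, b_defect. split; [|split].
  - exact lam4_pos.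
  - exact not_ess_selfadjoint_defect.
  - exact ess_selfadjoint_free.
Qed.
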